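(* Let $\xi>0$ with $\xi\neq1$, $\omega_0>0$, and define $\omega^2(k)=\frac{\omega_0^2}{\xi^2}\big((\xi-\cos k)^2+\sin^2 k\big)$, $\Omega_0=\frac{\omega_0}{\xi}|1-\xi|$, $\Omega_D=\frac{\omega_0}{\xi}(1+\xi)$, and for an integer $n$ and real $\omega$ with $\omega^2(k)\ne\omega^2$ for all $k$, $$\mathcal G_n(\omega)=\frac{1}{2\pi}\int_0^{2\pi}\frac{e^{ikn}}{\omega^2(k)-\omega^2}\,dk .$$ Then for $0\le\omega<\Omega_0$ and every integer $n$, $$\mathcal G_n(\omega)=\frac{1}{\sqrt{(\Omega_D^2-\omega^2)(\Omega_0^2-\omega^2)}}\left(\frac{\Omega_D^2+\Omega_0^2-2\omega^2-2\sqrt{(\Omega_D^2-\omega^2)(\Omega_0^2-\omega^2)}}{\Omega_D^2-\Omega_0^2}\right)^{|n|},$$ which is real-valued.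
   Context: $\mathcal G_n$ is the frequency-domain lattice Green's function (entry with $|p-q|=n$) of the exponentially graded linear chain (masses $m_0\xi^{2p}$, spring constants $m_0\xi^{2p}\omega_0^2$) in the limit of infinitely many particles, in the symmetrized variables $y_p=\xi^pu_p$; $\Omega_0$ and $\Omega_D$ are the lowest and highest eigenfrequencies. *)

From Stdlib Require Import Reals ZArith.
From Coquelicot Require Import Coquelicot.
Open Scope R_scope.

Definition omega2 (xi omega0 k : R) : R :=
  omega0 ^ 2 / xi ^ 2 * ((xi - cos k) ^ 2 + (sin k) ^ 2).

Definition Omega_0 (xi omega0 : R) : R := omega0 / xi * Rabs (1 - xi).
Definition Omega_D (xi omega0 : R) : R := omega0 / xi * (1 + xi).

Definition expikn (k : R) (n : Z) : C := (cos (k * IZR n), sin (k * IZR n)).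

Definition Gfun (xi omega0 : R) (n : Z) (w : R) : C :=
  Cmult (RtoC (/ (2 * PI)))
    (@RInt C_R_CompleteNormedModule (fun k : R => Cdiv (expikn k n) (RtoC (omega2 xi omega0 k - w ^ 2)))
          0 (2 * PI)).

From Stdlib Require Import Reals ZArith Lra Psatz.
From Coquelicot Require Import Coquelicot.
Open Scope R_scope.

(* Below the band, omega^2(k) - omega^2 = A - B cos k with 0 < B < A.  The imaginary
   part of G_n vanishes by the symmetry k -> 2 pi - k, and its real part is the cosine
   moment I_m = int_0^{2 pi} cos (m k) / (A - B cos k) dk with m = |n|, divided by 2 pi.
   From 2 cos k cos (m k) = cos ((m + 1) k) + cos ((m - 1) k) one gets
   B (I_{m+1} + I_{m-1}) = 2 A I_m for m >= 1 and B I_1 = A I_0 - 2 pi.  Let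
   r = (A - sqrt (A^2 - B^2)) / B be the root in (0,1) of B r^2 - 2 A r + B; then
   A - B cos k = B (1 - 2 r cos k + r^2) / (2 r) is a multiple of the Poisson kernel,
   which gives I_0 = 2 pi / sqrt (A^2 - B^2), and the recurrence forces I_m = I_0 r^m. *)

Lemma ex_RInt_derivable (f : R -> R) (a b : R) :
  (forall x, ex_derive f x) -> ex_RInt f a b.
Proof.
  intros Hf. apply (ex_RInt_continuous (V := R_CompleteNormedModule)); intros x _.
  now apply (ex_derive_continuous (V := R_NormedModule)).
Qed.

Lemma RInt_lin_comb (f g : R -> R) (alpha beta a b : R) :
  ex_RInt f a b -> ex_RInt g a b ->
  RInt (fun x => alpha * f x + beta * g x) a b = alpha * RInt f a b + beta * RInt g a b.
Proof.
  intros Hf Hg. apply is_RInt_unique.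
  exact (is_RInt_plus _ _ _ _ _ _ (is_RInt_scal _ _ _ alpha _ (RInt_correct _ _ _ Hf))
                                  (is_RInt_scal _ _ _ beta _ (RInt_correct _ _ _ Hg))).
Qed.

(* [RInt_ext] states the pointwise equality in the carrier of an abstract module,
   where [field] does not recognise it. *)
Lemma RInt_ext_R (f g : R -> R) (a b : R) :
  (forall x, f x = g x) -> RInt f a b = RInt g a b.
Proof. intros Hfg. apply RInt_ext. intros x _. apply Hfg. Qed.

Lemma RInt_midpoint_antisym (f : R -> R) (a b : R) :
  ex_RInt f a b -> (forall x, f (a + b - x) = - f x) -> RInt f a b = 0.
Proof.
  intros Hf Hanti.
  pose proof (RInt_comp_lin (V := R_CompleteNormedModule) f (-1) (a + b) a b) as Hrefl.
  replace (-1 * a + (a + b)) with b in Hrefl by ring.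
  replace (-1 * b + (a + b)) with a in Hrefl by ring.
  specialize (Hrefl (ex_RInt_swap _ _ _ Hf)).
  rewrite <- (opp_RInt_swap _ _ _ Hf) in Hrefl.
  rewrite (RInt_ext _ f) in Hrefl.
  2:{ intros x _. replace (-1 * x + (a + b)) with (a + b - x) by ring.
      rewrite Hanti. change (-1 * - f x = f x). ring. }
  change (RInt f a b = - RInt f a b) in Hrefl. lra.
Qed.

Lemma RInt_cos_mult (t : R) :
  t <> 0 -> sin (2 * PI * t) = 0 -> RInt (fun k => cos (k * t)) 0 (2 * PI) = 0.
Proof.
  intros Ht Hsin.
  assert (Hprim : is_RInt (fun k => cos (k * t)) 0 (2 * PI)
                    (minus (sin (2 * PI * t) / t) (sin (0 * t) / t))).
  { apply (is_RInt_derive (V := R_CompleteNormedModule) (fun k => sin (k * t) / t)).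
    - intros x _. auto_derive; [easy | field; exact Ht].
    - intros x _. apply (ex_derive_continuous (V := R_NormedModule) (fun k => cos (k * t))).
      auto_derive. easy. }
  rewrite (is_RInt_unique _ _ _ _ Hprim), Hsin, Rmult_0_l, sin_0.
  change (0 / t - 0 / t = 0). field. exact Ht.
Qed.

Lemma sin_2PI_IZR (n : Z) : sin (2 * PI * IZR n) = 0.
Proof. apply sin_eq_0_1. exists (2 * n)%Z. rewrite mult_IZR. ring. Qed.

Lemma cos_2PI_IZR (n : Z) : cos (2 * PI * IZR n) = 1.
Proof.
  replace (2 * PI * IZR n) with (2 * (IZR n * PI)) by ring.
  rewrite cos_2a_sin, sin_eq_0_1 by (now exists n). ring.
Qed.

Lemma is_derive_poisson_primitive (r k : R) : 0 <= r < 1 ->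
  is_derive (fun k => k + 2 * atan (r * sin k / (1 - r * cos k))) k
            ((1 - r ^ 2) / (1 - 2 * r * cos k + r ^ 2)).
Proof.
  intros Hr. pose proof (COS_bound k) as Hcos.
  assert (Hd : 0 < 1 - r * cos k) by nra.
  assert (Hq : 0 < 1 - 2 * r * cos k + r ^ 2) by nra.
  assert (Hsc : sin k ^ 2 = 1 - cos k ^ 2)
    by (pose proof (sin2_cos2 k) as H; unfold Rsqr in H; nra).
  auto_derive; [lra |].
  replace (1 + r * sin k * / (1 + - (r * cos k)) * (r * sin k * / (1 + - (r * cos k)) * 1))
    with ((1 - 2 * r * cos k + r ^ 2) / (1 - r * cos k) ^ 2).
  - field_simplify; [| lra ..]. rewrite Hsc. field. split; [lra |].
    match goal with |- ?den <> 0 =>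
      replace den with ((1 - r * cos k) ^ 2 * (1 - 2 * r * cos k + r ^ 2)) by ring end.
    apply Rgt_not_eq, Rmult_lt_0_compat; [apply pow_lt |]; lra.
  - field_simplify; [| lra ..]. rewrite Hsc. field. nra.
Qed.

Lemma RInt_poisson_kernel (r : R) : 0 <= r < 1 ->
  RInt (fun k => (1 - r ^ 2) / (1 - 2 * r * cos k + r ^ 2)) 0 (2 * PI) = 2 * PI.
Proof.
  intros Hr.
  set (F := fun k => k + 2 * atan (r * sin k / (1 - r * cos k))).
  apply is_RInt_unique.
  replace (2 * PI) with (minus (F (2 * PI)) (F 0)) at 2
    by (unfold F, minus, plus, opp; cbn;
        rewrite sin_2PI, sin_0, !Rmult_0_r, !Rdiv_0_l, atan_0; ring).
  apply (is_RInt_derive (V := R_CompleteNormedModule) F).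
  - intros k _. now apply is_derive_poisson_primitive.
  - intros k _. apply (ex_derive_continuous (V := R_NormedModule)).
    pose proof (COS_bound k). auto_derive. nra.
Qed.

Lemma geometric_of_linear_recurrence (u : nat -> R) (a b c r : R) :
  r ^ 2 = a * r - b -> u 0%nat = c -> u 1%nat = c * r ->
  (forall m, u (S (S m)) = a * u (S m) - b * u m) ->
  forall m, u m = c * r ^ m.
Proof.
  intros Hr H0 H1 Hrec.
  enough (Hpair : forall m, u m = c * r ^ m /\ u (S m) = c * r ^ S m) by apply Hpair.
  induction m as [| m [IH IHS]]; [split; [rewrite H0 | rewrite H1]; ring |].
  split; [exact IHS |].
  rewrite Hrec, IH, IHS.
  transitivity (c * r ^ m * (a * r - b)); [simpl; ring |].
  rewrite <- Hr. simpl. ring.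
Qed.

Definition cos_moment (A B t : R) : R :=
  RInt (fun k => cos (k * t) / (A - B * cos k)) 0 (2 * PI).

Section CosineMoments.

Variables A B : R.
Hypotheses (B_pos : 0 < B) (B_lt_A : B < A).

Let s := sqrt (A ^ 2 - B ^ 2).
Let r := (A - s) / B.

Lemma cos_denominator_pos (k : R) : 0 < A - B * cos k.
Proof. pose proof (COS_bound k). nra. Qed.

Lemma ex_RInt_over_cos_denominator (g : R -> R) :
  (forall x, ex_derive g x) -> ex_RInt (fun k => g k / (A - B * cos k)) 0 (2 * PI).
Proof.
  intros Hg. apply ex_RInt_derivable. intros x.
  pose proof (cos_denominator_pos x).
  apply ex_derive_mult; [apply Hg |]. auto_derive. lra.
Qed.

Lemma ex_RInt_cos_moment (t : R) :
  ex_RInt (fun k => cos (k * t) / (A - B * cos k)) 0 (2 * PI).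
Proof. apply ex_RInt_over_cos_denominator. intros x. auto_derive. easy. Qed.

Lemma sqrt_disc_pos : 0 < s.
Proof. apply sqrt_lt_R0. nra. Qed.

Lemma sqrt_disc_sq : s ^ 2 = A ^ 2 - B ^ 2.
Proof. rewrite <- Rsqr_pow2. apply Rsqr_sqrt. nra. Qed.

Lemma poisson_ratio_bounds : 0 < r < 1.
Proof.
  pose proof sqrt_disc_pos. pose proof sqrt_disc_sq.
  unfold r. split.
  - apply Rdiv_lt_0_compat; nra.
  - apply Rlt_div_l; nra.
Qed.

Lemma A_eq_ratio : A = B * (1 + r ^ 2) / (2 * r).
Proof.
  pose proof poisson_ratio_bounds.
  assert (E : B * (1 + r ^ 2) = 2 * r * A).
  { unfold r. field_simplify; [| lra ..]. rewrite sqrt_disc_sq. field. lra. }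
  rewrite E. field. lra.
Qed.

Lemma sqrt_disc_eq_ratio : s = B * (1 - r ^ 2) / (2 * r).
Proof.
  pose proof poisson_ratio_bounds.
  transitivity (A - B * r); [unfold r; field; lra |].
  rewrite A_eq_ratio at 1. field. lra.
Qed.

Lemma cos_moment_0 : cos_moment A B 0 = 2 * PI / s.
Proof.
  pose proof poisson_ratio_bounds as Hr.
  set (P := fun k => (1 - r ^ 2) / (1 - 2 * r * cos k + r ^ 2)).
  assert (HP : ex_RInt P 0 (2 * PI)).
  { apply ex_RInt_derivable. intros k. unfold P. pose proof (COS_bound k).
    auto_derive. nra. }
  unfold cos_moment. rewrite (RInt_ext _ (fun k => scal (/ s) (P k))).
  - rewrite (RInt_scal _ _ _ _ HP). unfold P. rewrite RInt_poisson_kernel by lra.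
    change (/ s * (2 * PI) = 2 * PI / s). field. apply Rgt_not_eq, sqrt_disc_pos.
  - intros k _. pose proof (COS_bound k).
    assert (Hq : 0 < 1 - 2 * r * cos k + r ^ 2) by nra.
    pose proof (Rmult_lt_0_compat _ _ B_pos Hq).
    change (cos (k * 0) / (A - B * cos k) = / s * P k). unfold P.
    rewrite Rmult_0_r, cos_0, sqrt_disc_eq_ratio, A_eq_ratio. field.
    repeat split; apply Rgt_not_eq; nra.
Qed.

Lemma cos_moment_opp (t : R) : cos_moment A B (- t) = cos_moment A B t.
Proof.
  unfold cos_moment. apply RInt_ext_R. intros k.
  now rewrite Ropp_mult_distr_r_reverse, cos_neg.
Qed.

Lemma cos_moment_recurrence (t : R) :
  B * cos_moment A B (t + 1) + B * cos_moment A B (t - 1)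
  = 2 * A * cos_moment A B t + (-2) * RInt (fun k => cos (k * t)) 0 (2 * PI).
Proof.
  assert (Hcos : ex_RInt (fun k => cos (k * t)) 0 (2 * PI)).
  { apply ex_RInt_derivable. intros x. auto_derive. easy. }
  unfold cos_moment.
  rewrite <- (RInt_lin_comb _ _ B B) by apply ex_RInt_cos_moment.
  rewrite <- (RInt_lin_comb _ _ (2 * A) (-2)); [| apply ex_RInt_cos_moment | exact Hcos].
  apply RInt_ext_R. intros k. pose proof (cos_denominator_pos k).
  replace (k * (t + 1)) with (k * t + k) by ring.
  replace (k * (t - 1)) with (k * t - k) by ring.
  rewrite cos_plus, cos_minus. field. lra.
Qed.

Lemma cos_moment_nat (m : nat) : cos_moment A B (INR m) = 2 * PI / s * r ^ m.
Proof.
  pose proof poisson_ratio_bounds. pose proof sqrt_disc_pos.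
  apply (geometric_of_linear_recurrence (fun m => cos_moment A B (INR m)) (2 * A / B) 1).
  - rewrite A_eq_ratio at 1. field. lra.
  - exact cos_moment_0.
  - pose proof (cos_moment_recurrence 0) as Hrec.
    rewrite Rplus_0_l, Rminus_0_l, cos_moment_opp, cos_moment_0 in Hrec.
    rewrite (RInt_ext_R _ (fun _ => 1)) in Hrec by (intros k; now rewrite Rmult_0_r, cos_0).
    rewrite (RInt_const (V := R_CompleteNormedModule)) in Hrec.
    change (scal (2 * PI - 0) 1) with ((2 * PI - 0) * 1) in Hrec.
    change (INR 1) with 1. apply Rmult_eq_reg_l with B; [| lra].
    transitivity (A * (2 * PI / s) - 2 * PI); [lra |].
    unfold r. field. split; lra.
  - intros j. apply Rmult_eq_reg_l with B; [| lra].
    pose proof (cos_moment_recurrence (INR (S j))) as Hrec.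
    rewrite RInt_cos_mult in Hrec.
    + rewrite <- S_INR in Hrec. replace (INR (S j) - 1) with (INR j) in Hrec
        by (rewrite S_INR; ring).
      transitivity (2 * A * cos_moment A B (INR (S j)) - B * cos_moment A B (INR j));
        [lra | field; lra].
    + apply not_0_INR. discriminate.
    + rewrite INR_IZR_INZ. apply sin_2PI_IZR.
Qed.

Lemma cos_moment_IZR (n : Z) :
  cos_moment A B (IZR n) = 2 * PI / s * r ^ Z.abs_nat n.
Proof.
  rewrite <- cos_moment_nat, INR_IZR_INZ, Nat2Z.inj_abs_nat, abs_IZR.
  unfold Rabs. destruct Rcase_abs; [rewrite cos_moment_opp |]; reflexivity.
Qed.

Lemma is_RInt_sin_over_cos_denominator (n : Z) :
  is_RInt (fun k => sin (k * IZR n) / (A - B * cos k)) 0 (2 * PI) 0.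
Proof.
  assert (Hex : ex_RInt (fun k => sin (k * IZR n) / (A - B * cos k)) 0 (2 * PI)).
  { apply ex_RInt_over_cos_denominator. intros x. auto_derive. easy. }
  pose proof (RInt_correct (V := R_CompleteNormedModule) _ _ _ Hex) as Hsin.
  rewrite RInt_midpoint_antisym in Hsin; [exact Hsin | exact Hex |].
  intros x. pose proof (cos_denominator_pos x).
  rewrite Rplus_0_l, Rmult_minus_distr_r, sin_minus, cos_minus,
    sin_2PI_IZR, cos_2PI_IZR, sin_2PI, cos_2PI.
  field. lra.
Qed.

End CosineMoments.

Lemma Omega_D_sq (xi omega0 : R) : xi <> 0 ->
  Omega_D xi omega0 ^ 2 = omega0 ^ 2 / xi ^ 2 * (1 + xi) ^ 2.
Proof. intros Hxi. unfold Omega_D. field. exact Hxi. Qed.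

Lemma Omega_0_sq (xi omega0 : R) : xi <> 0 ->
  Omega_0 xi omega0 ^ 2 = omega0 ^ 2 / xi ^ 2 * (1 - xi) ^ 2.
Proof. intros Hxi. unfold Omega_0. rewrite Rpow_mult_distr, pow2_abs. field. exact Hxi. Qed.

Lemma omega2_sub_sq (xi omega0 w k : R) : xi <> 0 ->
  let OD := Omega_D xi omega0 in let O0 := Omega_0 xi omega0 in
  omega2 xi omega0 k - w ^ 2
  = ((OD ^ 2 + O0 ^ 2) / 2 - w ^ 2) - (OD ^ 2 - O0 ^ 2) / 2 * cos k.
Proof.
  intros Hxi OD O0. unfold OD, O0, omega2. rewrite Omega_D_sq, Omega_0_sq by exact Hxi.
  replace (sin k ^ 2) with (1 - cos k ^ 2)
    by (pose proof (sin2_cos2 k) as H; unfold Rsqr in H; nra).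
  field. exact Hxi.
Qed.

Lemma Gfun_cos_moment (xi omega0 : R) (n : Z) (w A B : R) : 0 < B -> B < A ->
  (forall k, omega2 xi omega0 k - w ^ 2 = A - B * cos k) ->
  Gfun xi omega0 n w = RtoC (cos_moment A B (IZR n) / (2 * PI)).
Proof.
  intros HB HAB Hden. unfold Gfun.
  rewrite (is_RInt_unique (V := C_R_CompleteNormedModule) _ 0 (2 * PI) (cos_moment A B (IZR n), 0)).
  - unfold Cmult, RtoC. cbn [fst snd]. f_equal; [field; apply PI_neq0 | ring].
  - apply is_RInt_fct_extend_pair.
    + apply (is_RInt_ext (fun k => cos (k * IZR n) / (A - B * cos k))).
      * intros k _. pose proof (cos_denominator_pos A B HB HAB k).
        unfold expikn, Cdiv, Cmult, Cinv, RtoC. cbn. rewrite Hden. field. lra.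
      * apply (RInt_correct (V := R_CompleteNormedModule)), ex_RInt_cos_moment; assumption.
    + apply (is_RInt_ext (fun k => sin (k * IZR n) / (A - B * cos k))).
      * intros k _. pose proof (cos_denominator_pos A B HB HAB k).
        unfold expikn, Cdiv, Cmult, Cinv, RtoC. cbn. rewrite Hden. field. lra.
      * now apply is_RInt_sin_over_cos_denominator.
Qed.

Theorem mainTheorem2 (xi omega0 : R) (n : Z) (w : R) :
  0 < xi -> xi <> 1 -> 0 < omega0 ->
  0 <= w -> w < Omega_0 xi omega0 ->
  let OD := Omega_D xi omega0 in
  let O0 := Omega_0 xi omega0 in
  let S := sqrt ((OD ^ 2 - w ^ 2) * (O0 ^ 2 - w ^ 2)) in
  Gfun xi omega0 n w =
  RtoC (/ S * ((OD ^ 2 + O0 ^ 2 - 2 * w ^ 2 - 2 * S) / (OD ^ 2 - O0 ^ 2))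
               ^ (Z.abs_nat n)).
Proof.
  (* [xi <> 1] is implied by [w < Omega_0], which is [0] at [xi = 1]. *)
  intros Hxi _ Homega0 Hw HwO0 OD O0 S.
  set (A := (OD ^ 2 + O0 ^ 2) / 2 - w ^ 2).
  set (B := (OD ^ 2 - O0 ^ 2) / 2).
  assert (HB : 0 < B).
  { unfold B, OD, O0. rewrite Omega_D_sq, Omega_0_sq by lra.
    replace (_ / 2) with (2 * omega0 ^ 2 / xi) by (field; lra).
    apply Rdiv_lt_0_compat; nra. }
  assert (HAB : B < A) by (unfold A, B; fold O0 in HwO0; nra).
  assert (HS : S = sqrt (A ^ 2 - B ^ 2)) by (unfold S, A, B; f_equal; field).
  rewrite (Gfun_cos_moment xi omega0 n w A B HB HAB)
    by (intros k; apply omega2_sub_sq; lra).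
  rewrite cos_moment_IZR by assumption.
  pose proof (sqrt_disc_pos A B HB HAB). pose proof PI_RGT_0.
  rewrite <- HS. f_equal.
  replace ((OD ^ 2 + O0 ^ 2 - 2 * w ^ 2 - 2 * S) / (OD ^ 2 - O0 ^ 2)) with ((A - S) / B)
    by (unfold A, B; field; unfold B in HB; lra).
  field. lra.
Qed.
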